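(* If two topological large scale spaces $X$ and $Y$ are coarsely equivalent, then $\mathrm{Ends}(X)$ is homeomorphic to $\mathrm{Ends}(Y)$.
   Context: A large scale space is a set $X$ with a family $\mathbb{LSS}$ of covers (uniformly bounded covers) such that $st(\mathcal U,\mathcal V)\in\mathbb{LSS}$ whenever $\mathcal U,\mathcal V\in\mathbb{LSS}$, and any cover each of whose elements lies in some element of a member of $\mathbb{LSS}$ is in $\mathbb{LSS}$; here $st(x,\mathcal U)$ is the union of elements of $\mathcal U$ containing $x$, $st(A,\mathcal U)=\bigcup_{x\in A}st(x,\mathcal U)$, $st(\mathcal U,\mathcal V)=\{st(A,\mathcal V):A\in\mathcal U\}$. Bounded sets are subsets of elements of uniformly bounded covers; the union of two bounded sets is assumed bounded. $A$ is coarsely clopen if $st(A,\mathcal U)\cap st(X\setminus A,\mathcal U)$ is bounded for every uniformly bounded $\mathcal U$. An end is a family of unbounded coarsely clopen sets maximal with respect to all finite intersections being unbounded; $\mathrm{Ends}(X)$ is the set of ends. A topological large scale space additionally has a topology for which some uniformly bounded cover consists of open sets; $\mathrm{Ends}(X)$ is topologized by the basis $U_{end}=\{E\in\mathrm{Ends}(X):U\in E\}$, $U$ ranging over open coarsely clopen subsets of $X$. For maps $\varphi,\varphi':X\to Y$ of large scale spaces: they are close if there is a uniformly bounded cover $\mathcal U$ of $Y$ with $\varphi(x)\in st(\varphi'(x),\mathcal U)$ for all $x$; $\varphi$ is coarse if preimages of bounded sets are bounded; $\varphi$ is large scale continuous if for every uniformly bounded cover $\mathcal U$ of $X$ the family $\varphi(\mathcal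 U)$ refines a uniformly bounded cover of $Y$. $\varphi$ is a coarse equivalence if it is coarse and large scale continuous and there is a coarse large scale continuous $\psi:Y\to X$ with $\psi\circ\varphi$ close to $\mathrm{id}_X$ and $\varphi\circ\psi$ close to $\mathrm{id}_Y$; $X,Y$ are then coarsely equivalent. *)

From Stdlib Require Import List.

Set Implicit Arguments.

Section Basics.
Variable X : Type.

Definition subset (A B : X -> Prop) : Prop := forall x, A x -> B x.

Definition is_cover (U : (X -> Prop) -> Prop) : Prop :=
  forall x, exists A, U A /\ A x.

Definition st_pt (x : X) (U : (X -> Prop) -> Prop) : X -> Prop :=
  fun y => exists A, U A /\ A x /\ A y.

Definition st_set (A : X -> Prop) (U : (X -> Prop) -> Prop) : X -> Prop :=
  fun y => exists x, A x /\ st_pt x U y.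

Definition st_cov (U V : (X -> Prop) -> Prop) : (X -> Prop) -> Prop :=
  fun B => exists A, U A /\ (forall y, B y <-> st_set A V y).

End Basics.

(* A large scale space structure on X: the family of uniformly bounded covers. *)
Record LSS (X : Type) := {
  ub : ((X -> Prop) -> Prop) -> Prop;
  ub_is_cover : forall U, ub U -> is_cover U;
  ub_star : forall U V, ub U -> ub V -> ub (st_cov U V);
  ub_refine : forall W, is_cover W ->
      (exists U, ub U /\ forall B, W B -> exists A, U A /\ subset B A) ->
      ub W;
  (* standing assumption: the union of two bounded sets is bounded *)
  ub_bounded_union : forall B1 B2 : X -> Prop,
      (exists U, ub U /\ exists A, U A /\ subset B1 A) ->
      (exists U, ub U /\ exists A, U A /\ subset B2 A) ->
      (exists U, ub U /\ exists A, U A /\ subset (fun x => B1 x \/ B2 x) A)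
}.

Section LSSnotions.
Variables (X : Type) (L : LSS X).

Definition bounded (B : X -> Prop) : Prop :=
  exists U, ub L U /\ exists A, U A /\ subset B A.

Definition coarsely_clopen (A : X -> Prop) : Prop :=
  forall U, ub L U ->
    bounded (fun x => st_set A U x /\ st_set (fun z => ~ A z) U x).

Definition big_inter (l : list (X -> Prop)) : X -> Prop :=
  fun x => Forall (fun A => A x) l.

Definition good_family (E : (X -> Prop) -> Prop) : Prop :=
  (forall A, E A -> coarsely_clopen A /\ ~ bounded A) /\
  (forall l, l <> nil -> Forall E l -> ~ bounded (big_inter l)).

Definition is_end (E : (X -> Prop) -> Prop) : Prop :=
  good_family E /\
  forall E', good_family E' -> (forall A, E A -> E' A) -> forall A, E' A -> E A.

End LSSnotions.

Section Maps.
Variables (X Y : Type) (LX : LSS X) (LY : LSS Y).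

Definition image (f : X -> Y) (A : X -> Prop) : Y -> Prop :=
  fun y => exists x, A x /\ f x = y.

Definition close (f g : X -> Y) : Prop :=
  exists U, ub LY U /\ forall x, st_pt (g x) U (f x).

Definition coarse (f : X -> Y) : Prop :=
  forall B, bounded LY B -> bounded LX (fun x => B (f x)).

Definition ls_continuous (f : X -> Y) : Prop :=
  forall U, ub LX U ->
    exists V, ub LY V /\ forall A, U A -> exists B, V B /\ subset (image f A) B.

End Maps.

Definition coarse_equivalence (X Y : Type) (LX : LSS X) (LY : LSS Y)
    (f : X -> Y) : Prop :=
  coarse LX LY f /\ ls_continuous LX LY f /\
  exists g : Y -> X, coarse LY LX g /\ ls_continuous LY LX g /\
    close LX (fun x => g (f x)) (fun x => x) /\
    close LY (fun y => f (g y)) (fun y => y).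

Definition coarsely_equivalent (X Y : Type) (LX : LSS X) (LY : LSS Y) : Prop :=
  exists f : X -> Y, coarse_equivalence LX LY f.

Record TopLSS := {
  tcar : Type;
  tlss : LSS tcar;
  topen : (tcar -> Prop) -> Prop;
  topen_full : topen (fun _ => True);
  topen_inter : forall A B, topen A -> topen B -> topen (fun x => A x /\ B x);
  topen_union : forall F : (tcar -> Prop) -> Prop, (forall A, F A -> topen A) ->
      topen (fun x => exists A, F A /\ A x);
  topen_ub : exists U, ub tlss U /\ forall A, U A -> topen A
}.

Definition Ends (X : TopLSS) : Type :=
  { E : (tcar X -> Prop) -> Prop | is_end (tlss X) E }.

Definition basic_end_open (X : TopLSS) (U : tcar X -> Prop) : Ends X -> Prop :=
  fun E => proj1_sig E U.

Definition ends_open (X : TopLSS) (O : Ends X -> Prop) : Prop :=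
  forall E, O E -> exists U, topen X U /\ coarsely_clopen (tlss X) U /\
    basic_end_open U E /\ forall E', basic_end_open U E' -> O E'.

Definition ends_continuous (X Y : TopLSS) (f : Ends X -> Ends Y) : Prop :=
  forall O, ends_open O -> ends_open (fun E => O (f E)).

Definition ends_homeomorphic (X Y : TopLSS) : Prop :=
  exists (f : Ends X -> Ends Y) (g : Ends Y -> Ends X),
    (forall E, g (f E) = E) /\ (forall E, f (g E) = E) /\
    ends_continuous f /\ ends_continuous g.

(* Let f : X -> Y and g : Y -> X be coarse inverses.  An end of X is pushed
   forward to the family  f_*E = { B coarsely clopen in Y | f^-1 B in E }.
   The argument rests on three general facts:
   - coarse maps pull bounded sets back to bounded sets, so f_* sends good
     families (all finite intersections unbounded) to good families;
   - an end is closed under coarse supersets: if A is in E and A \ B is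
     bounded (or empty), then B is in E, because the coarse closure of a good
     family is again good;
   - a map close to the identity moves a coarsely clopen set A only by a
     bounded amount, so E is contained in g_* (f_* E).
   Maximality of ends then shows that f_* E is an end and that g_* inverts
   f_*.  For continuity, every coarsely clopen set A is coarsely equal to the
   open coarsely clopen set st(A, W), W an open uniformly bounded cover, so
   preimages of basic open sets of Ends(Y) are open in Ends(X). *)

From Stdlib Require Import List Classical FunctionalExtensionality
  PropExtensionality ProofIrrelevance.

Set Implicit Arguments.
Unset Strict Implicit.

Lemma set_ext {T : Type} (A B : T -> Prop) : (forall x, A x <-> B x) -> A = B.
Proof.
  intro H; apply functional_extensionality; intro x.
  apply propositional_extensionality; auto.
Qed.

Lemma big_inter_cons_iff {X : Type} (a : X -> Prop) (l : list (X -> Prop)) x :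
  big_inter (a :: l) x <-> a x /\ big_inter l x.
Proof.
  unfold big_inter; split; intro H.
  - inversion H; auto.
  - constructor; tauto.
Qed.

Lemma Forall_choose {A B : Type} (P : A -> Prop) (R : A -> B -> Prop) (l : list B) :
  Forall (fun b => exists a, P a /\ R a b) l ->
  exists l', Forall P l' /\ Forall2 R l' l.
Proof.
  induction 1 as [|b l [a [Ha Hab]] _ [l' [Hl' HR]]].
  - exists nil; split; constructor.
  - exists (a :: l'); split; constructor; auto.
Qed.

Section CoarseGeometry.
Variables (X : Type) (L : LSS X).

Lemma bounded_sub (B C : X -> Prop) : bounded L B -> subset C B -> bounded L C.
Proof.
  intros [U [HU [A [HA HBA]]]] HCB.
  exists U; split; auto. exists A; split; auto.
  intros x Hx; apply HBA, HCB, Hx.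
Qed.

(* Negligible sets: bounded or empty.  They measure the defect of coarse
   inclusions; the empty set need not be bounded when X has no points. *)
Definition negligible (D : X -> Prop) : Prop := bounded L D \/ forall x, ~ D x.

Lemma bounded_union_negligible (B D : X -> Prop) :
  bounded L B -> negligible D -> bounded L (fun x => B x \/ D x).
Proof.
  intros HB [HD|HD].
  - exact (ub_bounded_union L HB HD).
  - apply (bounded_sub HB). intros x [Hx|Hx]; [exact Hx|destruct (HD x Hx)].
Qed.

Lemma negligible_union (D1 D2 : X -> Prop) :
  negligible D1 -> negligible D2 -> negligible (fun x => D1 x \/ D2 x).
Proof.
  intros [H1|H1] H2.
  - left; apply bounded_union_negligible; auto.
  - destruct H2 as [H2|H2].
    + left; apply (bounded_sub H2). intros x [Hx|Hx]; [destruct (H1 x Hx)|exact Hx].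
    + right; intros x [Hx|Hx]; [exact (H1 x Hx)|exact (H2 x Hx)].
Qed.

(* The star of a bounded set with respect to a uniformly bounded cover is
   bounded: it lies in an element of st(U0, U). *)
Lemma bounded_st (U : (X -> Prop) -> Prop) (D : X -> Prop) :
  ub L U -> bounded L D -> bounded L (st_set D U).
Proof.
  intros HU [U0 [HU0 [B0 [HB0 HD]]]].
  exists (st_cov U0 U); split; [apply ub_star; auto|].
  exists (st_set B0 U); split.
  - exists B0; split; [auto|intro y; tauto].
  - intros y [x [Hx Hxy]]. exists x; split; auto.
Qed.

Lemma negligible_st (U : (X -> Prop) -> Prop) (D : X -> Prop) :
  ub L U -> negligible D -> negligible (st_set D U).
Proof.
  intros HU [HD|HD].
  - left; apply bounded_st; auto.
  - right; intros y [x [Hx _]]; exact (HD x Hx).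
Qed.

Definition coarse_subset (A B : X -> Prop) : Prop :=
  exists D, negligible D /\ forall x, A x -> B x \/ D x.

Lemma subset_coarse_subset (A B : X -> Prop) : subset A B -> coarse_subset A B.
Proof.
  intro HAB. exists (fun _ => False); split.
  - right; auto.
  - intros x Hx; left; apply HAB, Hx.
Qed.

Lemma coarse_subset_unbounded (A B : X -> Prop) :
  coarse_subset A B -> ~ bounded L A -> ~ bounded L B.
Proof.
  intros [D [HD HAB]] HA HB. apply HA.
  exact (bounded_sub (bounded_union_negligible HB HD) HAB).
Qed.

Lemma coarse_subset_inter (A A' B B' : X -> Prop) :
  coarse_subset A A' -> coarse_subset B B' ->
  coarse_subset (fun x => A x /\ B x) (fun x => A' x /\ B' x).
Proof.
  intros [D1 [HD1 HA]] [D2 [HD2 HB]].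
  exists (fun x => D1 x \/ D2 x); split; [apply negligible_union; auto|].
  intros x [Ha Hb]. destruct (HA x Ha), (HB x Hb); tauto.
Qed.

Lemma coarse_subset_big_inter (l' l : list (X -> Prop)) :
  Forall2 coarse_subset l' l -> coarse_subset (big_inter l') (big_inter l).
Proof.
  induction 1 as [|a' a l' l Ha _ IH].
  - apply subset_coarse_subset; intros x _; constructor.
  - destruct (coarse_subset_inter Ha IH) as [D [HD Hsub]].
    exists D; split; auto. intros x Hx.
    rewrite big_inter_cons_iff in Hx |- *. apply Hsub, Hx.
Qed.

Lemma coarsely_clopen_coarse_eq (A A' : X -> Prop) :
  coarsely_clopen L A -> coarse_subset A A' -> coarse_subset A' A ->
  coarsely_clopen L A'.
Proof.
  intros HA [D1 [HD1 HAA']] [D2 [HD2 HA'A]] U HU.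
  set (D := fun x => D1 x \/ D2 x).
  assert (HD : negligible (st_set D U)) by (apply negligible_st, negligible_union; auto).
  apply (bounded_sub (bounded_union_negligible (HA U HU) HD)).
  intros x [[a [Ha Hax]] [c [Hc Hcx]]].
  destruct (HA'A a Ha) as [HaA|HaD].
  - destruct (classic (A c)) as [HcA|HcA].
    + destruct (HAA' c HcA) as [HcA'|HcD]; [contradiction|].
      right; exists c; split; [left|]; auto.
    + left; split; [exists a|exists c]; auto.
  - right; exists a; split; [right|]; auto.
Qed.

(* A map close to the identity moves a coarsely clopen set A by a bounded
   amount: A and h^-1 A differ only inside the U-boundary of A. *)
Lemma close_to_id_coarse_eq (h : X -> X) (A : X -> Prop) :
  close L h (fun x => x) -> coarsely_clopen L A ->
  coarse_subset A (fun x => A (h x)) /\ coarse_subset (fun x => A (h x)) A.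
Proof.
  intros [U [HU Hclose]] HA.
  set (D := fun x => st_set A U x /\ st_set (fun z => ~ A z) U x).
  assert (HD : negligible D) by (left; apply HA; auto).
  split; exists D; split; auto; intros x Hx;
    destruct (Hclose x) as [C [HC [Cx Chx]]].
  - destruct (classic (A (h x))) as [Hh|Hh]; [left; auto|right].
    split; [exists x|exists (h x)]; split; auto; exists C; auto.
  - destruct (classic (A x)) as [Ha|Ha]; [left; auto|right].
    split; [exists (h x)|exists x]; split; auto; exists C; auto.
Qed.

Definition coarse_closure (E : (X -> Prop) -> Prop) : (X -> Prop) -> Prop :=
  fun B => coarsely_clopen L B /\ exists A, E A /\ coarse_subset A B.

Lemma coarse_closure_good (E : (X -> Prop) -> Prop) :
  good_family L E -> good_family L (coarse_closure E).
Proof.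
  intros [Helem Hinter]. split.
  - intros B [HB [A [HA HAB]]]. split; auto.
    exact (coarse_subset_unbounded HAB (proj2 (Helem A HA))).
  - intros l Hnil Hl.
    destruct (Forall_choose (P := E) (R := coarse_subset)
                (Forall_impl _ (fun B HB => proj2 HB) Hl)) as [l' [HEl' Hl'l]].
    apply (coarse_subset_unbounded (coarse_subset_big_inter Hl'l)), Hinter; auto.
    intro Hnil'; subst l'. destruct l; [contradiction|].
    discriminate (Forall2_length Hl'l).
Qed.

Lemma end_coarse_closed (E : (X -> Prop) -> Prop) (A B : X -> Prop) :
  is_end L E -> E A -> coarsely_clopen L B -> coarse_subset A B -> E B.
Proof.
  intros [HEgood HEmax] HA HB HAB.
  apply (HEmax (coarse_closure E)); [apply coarse_closure_good; auto| |].
  - intros A' HA'. split; [exact (proj1 (proj1 HEgood A' HA'))|].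
    exists A'; split; auto. apply subset_coarse_subset; intros x Hx; exact Hx.
  - split; eauto.
Qed.

End CoarseGeometry.

Section Pushforward.
Variables (X Y : Type) (LX : LSS X) (LY : LSS Y) (f : X -> Y).

(* Preimages of coarsely clopen sets under coarse, large scale continuous
   maps are coarsely clopen: the U-boundary of f^-1 B maps into the
   V-boundary of B for a uniformly bounded V refined by f(U). *)
Lemma preimage_coarsely_clopen (B : Y -> Prop) :
  coarse LX LY f -> ls_continuous LX LY f ->
  coarsely_clopen LY B -> coarsely_clopen LX (fun x => B (f x)).
Proof.
  intros Hcoarse Hlsc HB U HU. destruct (Hlsc U HU) as [V [HV HUV]].
  apply (bounded_sub (Hcoarse _ (HB V HV))).
  intros x [[a [Ha [C [HC [Ca Cx]]]]] [c [Hc [C' [HC' [C'c C'x]]]]]].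
  destruct (HUV C HC) as [D [HD HCD]]. destruct (HUV C' HC') as [D' [HD' HCD']].
  split.
  - exists (f a); split; auto. exists D; split; auto.
    split; apply HCD; [exists a|exists x]; split; auto.
  - exists (f c); split; auto. exists D'; split; auto.
    split; apply HCD'; [exists c|exists x]; split; auto.
Qed.

Definition push_family (E : (X -> Prop) -> Prop) : (Y -> Prop) -> Prop :=
  fun B => coarsely_clopen LY B /\ E (fun x => B (f x)).

Lemma push_family_good (E : (X -> Prop) -> Prop) :
  coarse LX LY f -> good_family LX E -> good_family LY (push_family E).
Proof.
  intros Hcoarse [Helem Hinter]. split.
  - intros B [HB HEB]. split; auto. intro Hb.
    exact (proj2 (Helem _ HEB) (Hcoarse _ Hb)).
  - intros l Hnil Hl Hb. apply (Hinter (map (fun B x => B (f x)) l)).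
    + destruct l; [contradiction|discriminate].
    + apply Forall_map. exact (Forall_impl _ (fun B HB => proj2 HB) Hl).
    + apply (bounded_sub (Hcoarse _ Hb)). intros x Hx.
      unfold big_inter in *. apply Forall_map in Hx. exact Hx.
Qed.

End Pushforward.

Record coarse_inverses (X Y : Type) (LX : LSS X) (LY : LSS Y)
    (f : X -> Y) (g : Y -> X) : Prop := {
  ci_f_coarse : coarse LX LY f;
  ci_f_lsc : ls_continuous LX LY f;
  ci_g_coarse : coarse LY LX g;
  ci_g_lsc : ls_continuous LY LX g;
  ci_gf : close LX (fun x => g (f x)) (fun x => x);
  ci_fg : close LY (fun y => f (g y)) (fun y => y) }.

Lemma coarse_inverses_sym (X Y : Type) (LX : LSS X) (LY : LSS Y) f g :
  coarse_inverses LX LY f g -> coarse_inverses LY LX g f.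
Proof. intros []; constructor; auto. Qed.

Section Transport.
Variables (X Y : Type) (LX : LSS X) (LY : LSS Y) (f : X -> Y) (g : Y -> X).
Hypothesis Hfg : coarse_inverses LX LY f g.

(* E is contained in g_* (f_* E): (gf)^-1 A is coarsely equal to A. *)
Lemma end_sub_pull_push (E : (X -> Prop) -> Prop) (A : X -> Prop) :
  is_end LX E -> E A -> push_family LX g (push_family LY f E) A.
Proof.
  intros HE HA. destruct Hfg as [fc fl gc gl gf _].
  assert (HAcc : coarsely_clopen LX A) by exact (proj1 (proj1 (proj1 HE) A HA)).
  assert (HAg : coarsely_clopen LY (fun y => A (g y)))
    by exact (preimage_coarsely_clopen gc gl HAcc).
  split; [exact HAcc|split; [exact HAg|]].
  apply (end_coarse_closed HE HA); [exact (preimage_coarsely_clopen fc fl HAg)|].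
  exact (proj1 (close_to_id_coarse_eq gf HAcc)).
Qed.

(* Maximality: if a good family E'
   contains f_* E, then g_* of the coarse closure of E' contains E, hence
   equals it, and every B in E' has f^-1 B in E since B is coarsely
   contained in (fg)^-1 B. *)
Lemma push_family_end (E : (X -> Prop) -> Prop) :
  is_end LX E -> is_end LY (push_family LY f E).
Proof.
  intro HE. destruct Hfg as [fc fl gc gl _ fg].
  split; [exact (push_family_good fc (proj1 HE))|].
  intros E' HE' Hsub B HB.
  assert (HBcc : coarsely_clopen LY B) by exact (proj1 (proj1 HE' B HB)).
  assert (Hpull : forall A, push_family LX g (coarse_closure LY E') A -> E A).
  { apply (proj2 HE); [exact (push_family_good gc (coarse_closure_good HE'))|].
    intros A HA. destruct (end_sub_pull_push HE HA) as [HAcc HAgf].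
    split; [exact HAcc|split; [exact (proj1 HAgf)|]].
    exists (fun y => A (g y)); split; [apply Hsub; exact HAgf|].
    apply subset_coarse_subset; intros y Hy; exact Hy. }
  split; [exact HBcc|apply Hpull].
  assert (HBf : coarsely_clopen LX (fun x => B (f x)))
    by exact (preimage_coarsely_clopen fc fl HBcc).
  split; [exact HBf|].
  split; [exact (preimage_coarsely_clopen gc gl HBf)|].
  exists B; split; [exact HB|exact (proj1 (close_to_id_coarse_eq fg HBcc))].
Qed.

Lemma pull_push_end (E : (X -> Prop) -> Prop) :
  is_end LX E -> push_family LX g (push_family LY f E) = E.
Proof.
  intro HE. destruct Hfg as [fc _ gc _ _ _].
  apply set_ext; intro A; split; [|apply end_sub_pull_push; exact HE].
  apply (proj2 HE); [|intro A'; apply end_sub_pull_push; exact HE].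
  exact (push_family_good gc (push_family_good fc (proj1 HE))).
Qed.

End Transport.

(* Every coarsely clopen set of a topological large scale space is coarsely
   equal to an open coarsely clopen set, namely its star with respect to an
   open uniformly bounded cover. *)
Lemma open_coarse_representative (X : TopLSS) (A : tcar X -> Prop) :
  coarsely_clopen (tlss X) A ->
  exists V, topen X V /\ coarsely_clopen (tlss X) V /\
    coarse_subset (tlss X) A V /\ coarse_subset (tlss X) V A.
Proof.
  intro HA. destruct (topen_ub X) as [W [HW HWopen]].
  set (V := fun y => exists B, (W B /\ exists x, A x /\ B x) /\ B y).
  assert (HAV : coarse_subset (tlss X) A V).
  { apply subset_coarse_subset. intros x Hx.
    destruct (ub_is_cover _ _ HW x) as [B [HB Bx]].
    exists B; split; [split; [auto|exists x; auto]|auto]. }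
  assert (HVA : coarse_subset (tlss X) V A).
  { exists (fun x => st_set A W x /\ st_set (fun z => ~ A z) W x).
    split; [left; apply HA; auto|].
    intros y [B [[HB [x [Hx Bx]]] By]].
    destruct (classic (A y)); [left; auto|right].
    split; [exists x|exists y]; split; auto; exists B; auto. }
  exists V; split; [apply topen_union; intros B [HB _]; auto|].
  split; [exact (coarsely_clopen_coarse_eq HA HAV HVA)|auto].
Qed.

Lemma ends_eq (Z : TopLSS) (a b : Ends Z) : proj1_sig a = proj1_sig b -> a = b.
Proof. destruct a, b; simpl; intro; subst; f_equal; apply proof_irrelevance. Qed.

Section EndsMap.
Variables (X Y : TopLSS) (f : tcar X -> tcar Y) (g : tcar Y -> tcar X).
Hypothesis Hfg : coarse_inverses (tlss X) (tlss Y) f g.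

Definition push_end (E : Ends X) : Ends Y :=
  exist _ (push_family (tlss Y) f (proj1_sig E)) (push_family_end Hfg (proj2_sig E)).

(* The preimage of a basic open set U_end is a union of basic open sets
   V_end, V an open representative of the coarse class of f^-1 U. *)
Lemma push_end_continuous : ends_continuous push_end.
Proof.
  intros O HO E HOE.
  destruct (HO _ HOE) as [U [_ [HUcc [[_ HEU] HUO]]]].
  assert (HA : coarsely_clopen (tlss X) (fun x => U (f x)))
    by exact (preimage_coarsely_clopen (ci_f_coarse Hfg) (ci_f_lsc Hfg) HUcc).
  destruct (open_coarse_representative HA) as [V [HVopen [HVcc [HAV HVA]]]].
  exists V; split; [exact HVopen|split; [exact HVcc|split]].
  - exact (end_coarse_closed (proj2_sig E) HEU HVcc HAV).
  - intros E' HE'. apply HUO. split; [exact HUcc|].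
    exact (end_coarse_closed (proj2_sig E') HE' HA HVA).
Qed.

End EndsMap.

Theorem corollary2p27 (X Y : TopLSS) :
  coarsely_equivalent (tlss X) (tlss Y) -> ends_homeomorphic X Y.
Proof.
  intros [f [fc [fl [g [gc [gl [gf fg]]]]]]].
  assert (Hfg : coarse_inverses (tlss X) (tlss Y) f g) by (constructor; auto).
  pose proof (coarse_inverses_sym Hfg) as Hgf.
  exists (push_end Hfg), (push_end Hgf).
  split; [|split; [|split]].
  - intro E. apply ends_eq. exact (pull_push_end Hfg (proj2_sig E)).
  - intro E. apply ends_eq. exact (pull_push_end Hgf (proj2_sig E)).
  - apply push_end_continuous.
  - apply push_end_continuous.
Qed.
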